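(* Let $(W,S)$ be a Coxeter system with $S$ finite such that all elements of $Q_W$ are conjugate in $W$ (i.e. $c(W)=1$). Identify $C_W$ with $\mathbb{Z}$ via $e_s^2\mapsto1$ ($s\in S$). Define $\tau_\rho:W\times W\to\mathbb{Z}$ by $\tau_\rho(w_1,w_2)=1$ if $\ell(w_1)$ and $\ell(w_2)$ are both odd, and $\tau_\rho(w_1,w_2)=0$ otherwise, where $\ell$ is the length function with respect to $S$. Then $\tau_\rho$ is a normalized $2$-cocycle and $[\tau_\rho]=u_\phi\in H^2(W,\mathbb{Z})$, where $u_\phi$ is the class of the central extension $0\to\mathbb{Z}\to\operatorname{Ad}(Q_W)\xrightarrow{\phi}W\to1$.
   Context: A Coxeter system $(W,S)$: $S$ finite, $m:S\times S\to\mathbb{N}\cup\{\infty\}$ with $m(s,s)=1$, $2\le m(s,t)=m(t,s)\le\infty$ for $s\ne t$, $W=\langle s\in S\mid (st)^{m(s,t)}=1\ (m(s,t)<\infty)\rangle$. The Coxeter quandle $Q_W=\bigcup_{w\in W}w^{-1}Sw$ has operation $x\ast y=yxy$; $\operatorname{Ad}(Q_W)=\langle e_x\ (x\in Q_W)\mid e_y^{-1}e_xe_y=e_{x\ast y}\rangle$; $\phi:\operatorname{Ad}(Q_W)\to W$ is $e_x\mapsto x$ and $C_W=\ker\phi$, a central subgroup. $c(W)$ is the number of $W$-conjugacy classes in $Q_W$. When $c(W)=1$, $C_W$ is infinite cyclic generated by $e_s^2$, and $e_s^2$ is the same element for all $s\in S$, so the identification is well defined. *)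

From Stdlib Require Import ZArith.
From mathcomp Require Import all_boot.

Set Implicit Arguments.
Unset Strict Implicit.
Unset Printing Implicit Defensive.

Record Grp := {
  carrier :> Type;
  gmul : carrier -> carrier -> carrier;
  gone : carrier;
  ginv : carrier -> carrier;
  gmulA : forall x y z, gmul x (gmul y z) = gmul (gmul x y) z;
  gmul1l : forall x, gmul gone x = x;
  gmul1r : forall x, gmul x gone = x;
  gmulVl : forall x, gmul (ginv x) x = gone;
  gmulVr : forall x, gmul x (ginv x) = gone
}.

Arguments gmul {g} _ _.
Arguments gone {g}.
Arguments ginv {g} _.

Fixpoint gpow (G : Grp) (x : G) (n : nat) : G :=
  match n with 0 => gone | S k => gmul x (gpow x k) end.

Definition gzpow (G : Grp) (x : G) (n : Z) : G :=
  match n with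
  | Z0 => gone
  | Zpos p => gpow x (Pos.to_nat p)
  | Zneg p => ginv (gpow x (Pos.to_nat p))
  end.

Definition hom (G H : Grp) (h : G -> H) : Prop :=
  forall x y, h (gmul x y) = gmul (h x) (h y).

(* G is the group presented by generators gen : X -> G subject to the
   relations rels (a relation set is described by what it means for an
   assignment f : X -> H in an arbitrary group H to satisfy it):
   gen satisfies the relations, and for every group H and every assignment
   satisfying them there is a unique homomorphism extending it. *)
Definition is_presentation (G : Grp) (X : Type) (gen : X -> G)
  (rels : forall H : Grp, (X -> H) -> Prop) : Prop :=
  rels G gen /\
  forall (H : Grp) (f : X -> H), rels H f ->
    exists h : G -> H, hom h /\ (forall x, h (gen x) = f x) /\
      (forall h' : G -> H, hom h' -> (forall x, h' (gen x) = f x) ->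
         forall g, h' g = h g).

(* m s t = None encodes m(s,t) = infinity *)
Definition coxeter_matrix (S : finType) (m : S -> S -> option nat) : Prop :=
  forall s t : S,
    m s t = m t s /\
    (s = t -> m s t = Some 1) /\
    (s <> t -> match m s t with Some k => (2 <= k)%N | None => true end).

Definition cox_rels (S : finType) (m : S -> S -> option nat)
  (H : Grp) (f : S -> H) : Prop :=
  forall (s t : S) (k : nat), m s t = Some k -> gpow (gmul (f s) (f t)) k = gone.

Definition word_prod (S : finType) (W : Grp) (iota : S -> W) (l : seq S) : W :=
  foldr (fun s acc => gmul (iota s) acc) gone l.

Definition is_length (S : finType) (W : Grp) (iota : S -> W) (w : W) (n : nat)
  : Prop :=
  (exists l : seq S, size l = n /\ word_prod iota l = w) /\
  (forall l : seq S, word_prod iota l = w -> (n <= size l)%N).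

Definition in_QW (S : finType) (W : Grp) (iota : S -> W) (x : W) : Prop :=
  exists (w : W) (s : S), x = gmul (gmul (ginv w) (iota s)) w.

Definition QW (S : finType) (W : Grp) (iota : S -> W) : Type :=
  { x : W | in_QW iota x }.

(* relations of Ad(Q_W): e_y^{-1} e_x e_y = e_{x * y}, with x * y = y x y *)
Definition ad_rels (S : finType) (W : Grp) (iota : S -> W)
  (H : Grp) (e : QW iota -> H) : Prop :=
  forall x y z : QW iota,
    proj1_sig z = gmul (gmul (proj1_sig y) (proj1_sig x)) (proj1_sig y) ->
    gmul (gmul (ginv (e y)) (e x)) (e y) = e z.

Definition one_conj_class (S : finType) (W : Grp) (iota : S -> W) : Prop :=
  (exists x : W, in_QW iota x) /\
  forall x y : QW iota, exists w : W,
    proj1_sig y = gmul (gmul (ginv w) (proj1_sig x)) w.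

Definition normalized_2cocycle (W : Grp) (t : W -> W -> Z) : Prop :=
  (forall w, t gone w = 0%Z /\ t w gone = 0%Z) /\
  (forall a b c : W,
     (t b c - t (gmul a b) c + t a (gmul b c) - t a b)%Z = 0%Z).

Definition tau_rho (W : Grp) (l : W -> nat) (w1 w2 : W) : Z :=
  if odd (l w1) && odd (l w2) then 1%Z else 0%Z.

(* [t] equals the class u_phi of the central extension
   0 -> Z -> A -> W -> 1, where Z is identified with ker phi via n |-> z^n:
   there is a set-theoretic section sigma of phi whose extension cocycle
   f(a,b) (defined by sigma a * sigma b = z^f(a,b) * sigma (a b))
   differs from t by a coboundary dc(a,b) = c a - c (a b) + c b. *)
Definition class_eq_ext (A W : Grp) (phi : A -> W) (z : A)
  (t : W -> W -> Z) : Prop :=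
  exists (sigma : W -> A) (c : W -> Z),
    (forall w, phi (sigma w) = w) /\
    forall a b : W,
      gmul (sigma a) (sigma b) =
      gmul (gzpow z (t a b + c a - c (gmul a b) + c b)%Z) (sigma (gmul a b)).

Arguments cox_rels {S} m H f.
Arguments ad_rels {S W} iota H e.

From Stdlib Require Import ZArith Lia.
From Stdlib Require Import ProofIrrelevance ClassicalEpsilon FunctionalExtensionality PropExtensionality.
From mathcomp Require Import all_boot zify.

(* In Ad(Q_W) the squares e_x^2 commute with every generator, hence are central, and they are
   invariant under conjugation; as c(W) = 1 they all equal one central element z.  Modulo z the
   e_x become involutions still satisfying the relations of Ad(Q_W), so the images of the e_s,
   s in S, satisfy the Coxeter relations and W maps to Ad(Q_W)/<z>.  Hence the section
   sigma(w) = e_(s_1) ... e_(s_k), for a reduced word s_1 ... s_k of w, satisfies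
   sigma(a) sigma(b) = z^k sigma(ab), and the degree map Ad(Q_W) -> Z, e_x |-> 1, gives
   2k = l(a) + l(b) - l(ab).  Writing l = 2 floor(l/2) + (l mod 2) identifies k with
   tau_rho(a,b) plus the coboundary of w |-> floor(l(w)/2); the same identity gives
   l(ab) = l(a) + l(b) mod 2, which makes tau_rho a cocycle. *)

Set Implicit Arguments.
Unset Strict Implicit.
Unset Printing Implicit Defensive.

Section GroupFacts.
Variable G : Grp.
Implicit Types a b x y : G.

Lemma mulKg x y : gmul (ginv x) (gmul x y) = y.
Proof. by rewrite gmulA gmulVl gmul1l. Qed.

Lemma mulgK x y : gmul (gmul y x) (ginv x) = y.
Proof. by rewrite -gmulA gmulVr gmul1r. Qed.

Lemma mulgVK x y : gmul (gmul y (ginv x)) x = y.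
Proof. by rewrite -gmulA gmulVl gmul1r. Qed.

Lemma mulgI x y y' : gmul x y = gmul x y' -> y = y'.
Proof. by move=> E; rewrite -(mulKg x y) E mulKg. Qed.

Lemma mulIg x y y' : gmul y x = gmul y' x -> y = y'.
Proof. by move=> E; rewrite -(mulgK x y) E mulgK. Qed.

Lemma invg_eq x y : gmul x y = gone -> ginv x = y.
Proof. by move=> E; apply: (mulgI (x := x)); rewrite E gmulVr. Qed.

Lemma invMg x y : ginv (gmul x y) = gmul (ginv y) (ginv x).
Proof. by apply: invg_eq; rewrite gmulA -(gmulA x y) gmulVr gmul1r gmulVr. Qed.

Lemma invg1 : ginv (@gone G) = gone.
Proof. by apply: invg_eq; rewrite gmul1l. Qed.

Lemma gpowD x m n : gpow x (m + n) = gmul (gpow x m) (gpow x n).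
Proof. by elim: m => [|m IH] /=; rewrite ?gmul1l // IH gmulA. Qed.

Lemma gpowSr x n : gpow x n.+1 = gmul (gpow x n) x.
Proof. by rewrite -addn1 gpowD /= gmul1r. Qed.

Lemma commute_gpow x y n : gmul x y = gmul y x -> gmul (gpow x n) y = gmul y (gpow x n).
Proof.
move=> xy; elim: n => /= [|n IH]; first by rewrite gmul1l gmul1r.
by rewrite -gmulA IH !gmulA xy.
Qed.

Lemma dihedral_reflection_step a b n :
  gmul a a = gone -> gmul b b = gone ->
  let r k := gmul (gpow (gmul a b) k) a in
  gmul (gmul (r n.+1) (r n)) (r n.+1) = r n.+2.
Proof.
move=> aa bb r; rewrite /r.
set u := gmul a b; set v := gmul b a.
have au k : gmul a (gpow u k) = gmul (gpow v k) a.
  have av : gmul a u = gmul v a by rewrite /u /v gmulA aa gmul1l -gmulA aa gmul1r.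
  elim: k => /= [|k IH]; first by rewrite gmul1l gmul1r.
  by rewrite gmulA av -gmulA IH gmulA.
have vu k : gmul (gpow v k) (gpow u k) = gone.
  elim: k => [|k IH]; first exact: gmul1l.
  rewrite [gpow u _]gpowSr /=.
  by rewrite -gmulA (gmulA (gpow v k)) IH gmul1l /u /v gmulA -(gmulA b) aa gmul1r bb.
have ap := au n; have qp := vu n.
rewrite !gpowSr.
move: ap qp; set p := gpow u n; set q := gpow v n; clearbody u v p q => ap qp.
rewrite -!gmulA (gmulA a p) ap -gmulA (gmulA a a) aa gmul1l.
by rewrite (gmulA q) qp gmul1l.
Qed.
End GroupFacts.

Section Homomorphisms.
Variables (G H : Grp) (h : G -> H).
Hypothesis h_hom : hom h.

Lemma hom1 : h gone = gone.
Proof. by apply: (mulgI (x := h gone)); rewrite -h_hom !gmul1r. Qed.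

Lemma homV x : h (ginv x) = ginv (h x).
Proof. by symmetry; apply: invg_eq; rewrite -h_hom gmulVr hom1. Qed.

Lemma hom_gpow x n : h (gpow x n) = gpow (h x) n.
Proof. by elim: n => /= [|n IH]; rewrite ?hom1 // h_hom IH. Qed.

Lemma hom_word_prod (S : finType) (f : S -> G) (g : S -> H) :
  (forall s, h (f s) = g s) -> forall L, h (word_prod f L) = word_prod g L.
Proof. by move=> hf; elim=> /= [|s L IH]; rewrite ?hom1 // h_hom hf IH. Qed.
End Homomorphisms.

Lemma conj_hom (G : Grp) (c : G) : hom (fun g => gmul (gmul c g) (ginv c)).
Proof. by move=> a b; rewrite !gmulA mulgVK. Qed.

Lemma gzpow_sub (G : Grp) (x : G) m n :
  gzpow x (Z.of_nat n - Z.of_nat m) = gmul (ginv (gpow x m)) (gpow x n).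
Proof.
case: (leqP m n) => [mn | nm].
  have -> : (Z.of_nat n - Z.of_nat m = Z.of_nat (n - m))%Z by lia.
  rewrite -[in RHS](subnKC mn) gpowD mulKg.
  by case: (n - m)%N => //= k; rewrite SuccNat2Pos.id_succ.
have [k ->] : exists k, m = (n + k.+1)%N by exists (m - n.+1)%N; lia.
have -> : (Z.of_nat n - Z.of_nat (n + k.+1) = - Z.of_nat k.+1)%Z by lia.
by rewrite gpowD invMg -gmulA gmulVl gmul1r /= SuccNat2Pos.id_succ.
Qed.

Definition Zgrp : Grp := {| carrier := Z; gmul := Z.add; gone := 0%Z; ginv := Z.opp;
  gmulA := Z.add_assoc; gmul1l := Z.add_0_l; gmul1r := Z.add_0_r;
  gmulVl := Z.add_opp_diag_l; gmulVr := Z.add_opp_diag_r |}.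

Lemma Zgrp_gpow (x : Zgrp) n : gpow x n = (Z.of_nat n * x)%Z.
Proof. elim: n => //= n ->; change (x + Z.of_nat n * x = Z.of_nat n.+1 * x)%Z; lia. Qed.

Lemma Zgrp_word_prod1 (S : finType) (L : seq S) :
  @word_prod _ Zgrp (fun _ => 1%Z) L = Z.of_nat (size L).
Proof. elim: L => //= s L ->; change (1 + Z.of_nat (size L) = Z.of_nat (size L).+1)%Z; lia. Qed.

Section Presentations.
Variables (G : Grp) (X : Type) (gen : X -> G) (rels : forall H : Grp, (X -> H) -> Prop).
Hypothesis G_pres : is_presentation gen rels.

Lemma presentation_endo_id (h : G -> G) :
  hom h -> (forall x, h (gen x) = gen x) -> forall g, h g = g.
Proof.
case: G_pres => rels_gen univ h_hom h_gen g.
have [k [_ [_ k_uniq]]] := univ G gen rels_gen.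
by rewrite (k_uniq h h_hom h_gen g) -(k_uniq id (fun _ _ => erefl) (fun _ => erefl) g).
Qed.

Lemma presentation_central (c : G) :
  (forall x, gmul c (gen x) = gmul (gen x) c) -> forall g, gmul c g = gmul g c.
Proof.
move=> c_gen g.
have conj_id : gmul (gmul c g) (ginv c) = g.
  by apply: (presentation_endo_id (conj_hom c)) => x; rewrite c_gen mulgK.
by rewrite -{2}conj_id mulgVK.
Qed.
End Presentations.

Section QuotientGroup.
Variables (G : Grp) (R : G -> G -> Prop).
Hypotheses (R_refl : forall a, R a a) (R_sym : forall a b, R a b -> R b a)
  (R_trans : forall a b c, R a b -> R b c -> R a c)
  (R_mul : forall a a' b b', R a a' -> R b b' -> R (gmul a b) (gmul a' b')).

Lemma R_inv a a' : R a a' -> R (ginv a) (ginv a').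
Proof.
move=> Ra; have := R_mul (R_mul (R_refl (ginv a)) Ra) (R_refl (ginv a')).
by rewrite gmulVl gmul1l mulgK => /R_sym.
Qed.

Definition coset_class := {P : G -> Prop | exists a, P = R a}.

Definition cl (a : G) : coset_class := exist _ (R a) (ex_intro _ a erefl).

Definition repr (P : coset_class) : G :=
  proj1_sig (constructive_indefinite_description _ (proj2_sig P)).

Lemma cl_repr P : cl (repr P) = P.
Proof.
rewrite /repr; case: constructive_indefinite_description => a /=.
by case: P => P HP /= PRa; apply: subset_eq_compat.
Qed.

Lemma eq_cl a b : cl a = cl b <-> R a b.
Proof.
split=> [/(f_equal (@proj1_sig _ _)) /= -> // | Rab].
apply: subset_eq_compat; apply: functional_extensionality => c.
apply: propositional_extensionality.
by split=> [Rac | Rbc]; [apply: R_trans (R_sym Rab) Rac | apply: R_trans Rab Rbc].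
Qed.

Lemma clP P : exists a, P = cl a.
Proof. by exists (repr P); rewrite cl_repr. Qed.

Lemma repr_cl a : R (repr (cl a)) a.
Proof. by apply/eq_cl; rewrite cl_repr. Qed.

Definition mulq (P Q : coset_class) := cl (gmul (repr P) (repr Q)).
Definition invq (P : coset_class) := cl (ginv (repr P)).
Definition oneq := cl gone.

Lemma mulq_cl a b : mulq (cl a) (cl b) = cl (gmul a b).
Proof. by apply/eq_cl; apply: R_mul; apply: repr_cl. Qed.

Lemma invq_cl a : invq (cl a) = cl (ginv a).
Proof. by apply/eq_cl; apply: R_inv; apply: repr_cl. Qed.

Lemma mulqA P Q T : mulq P (mulq Q T) = mulq (mulq P Q) T.
Proof. by case: (clP P) (clP Q) (clP T) => [a ->] [b ->] [c ->]; rewrite !mulq_cl gmulA. Qed.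

Lemma mul1q P : mulq oneq P = P.
Proof. by case: (clP P) => a ->; rewrite mulq_cl gmul1l. Qed.

Lemma mulq1 P : mulq P oneq = P.
Proof. by case: (clP P) => a ->; rewrite mulq_cl gmul1r. Qed.

Lemma mulVq P : mulq (invq P) P = oneq.
Proof. by case: (clP P) => a ->; rewrite invq_cl mulq_cl gmulVl. Qed.

Lemma mulqV P : mulq P (invq P) = oneq.
Proof. by case: (clP P) => a ->; rewrite invq_cl mulq_cl gmulVr. Qed.

Definition quotient_grp : Grp :=
  {| carrier := coset_class; gmul := mulq; gone := oneq; ginv := invq;
     gmulA := mulqA; gmul1l := mul1q; gmul1r := mulq1; gmulVl := mulVq; gmulVr := mulqV |}.

Lemma cl_hom : @hom G quotient_grp cl.
Proof. by move=> a b; rewrite /= mulq_cl. Qed.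
End QuotientGroup.

Section CentralQuotient.
Variables (G : Grp) (z : G).
Hypothesis z_central : forall g, gmul z g = gmul g z.

(* [a] and [b] differ by an integer power of [z], written with natural exponents. *)
Definition eqmodz (a b : G) := exists m n, gmul (gpow z m) a = gmul (gpow z n) b.

Lemma gpowz_mul m n a b :
  gmul (gmul (gpow z m) a) (gmul (gpow z n) b) = gmul (gpow z (m + n)) (gmul a b).
Proof.
by rewrite gpowD -!gmulA; congr gmul; rewrite !gmulA (commute_gpow n (z_central a)).
Qed.

Lemma eqmodz_refl a : eqmodz a a.
Proof. by exists 0%N, 0%N. Qed.

Lemma eqmodz_sym a b : eqmodz a b -> eqmodz b a.
Proof. by case=> m [n E]; exists n, m. Qed.

Lemma eqmodz_trans a b c : eqmodz a b -> eqmodz b c -> eqmodz a c.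
Proof.
case=> m [n ab] [p [q bc]]; exists (p + m)%N, (n + q)%N.
rewrite !gpowD -!gmulA ab !gmulA -(gpowD z p n) addnC gpowD -gmulA bc.
by rewrite gmulA -gpowD.
Qed.

Lemma eqmodz_mul a a' b b' : eqmodz a a' -> eqmodz b b' -> eqmodz (gmul a b) (gmul a' b').
Proof.
by case=> m [n aa'] [p [q bb']]; exists (m + p)%N, (n + q)%N; rewrite -!gpowz_mul aa' bb'.
Qed.

Definition zquotient := quotient_grp eqmodz_refl eqmodz_sym eqmodz_trans eqmodz_mul.

Definition zcl (a : G) : zquotient := cl eqmodz a.

Lemma zcl_hom : hom zcl.
Proof. exact: cl_hom. Qed.

Lemma eq_zcl a b : zcl a = zcl b <-> eqmodz a b.
Proof. exact: (eq_cl eqmodz_refl eqmodz_sym eqmodz_trans). Qed.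
End CentralQuotient.

Section CoxeterQuandle.
Variables (S : finType) (W : Grp) (iota : S -> W).

Lemma QW_inj (x y : QW iota) : proj1_sig x = proj1_sig y -> x = y.
Proof. by case: x y => x Qx [y Qy] /= xy; apply: subset_eq_compat. Qed.

Lemma in_QW_gen s : in_QW iota (iota s).
Proof. by exists gone, s; rewrite invg1 gmul1l gmul1r. Qed.

Lemma in_QW_conj g x : in_QW iota x -> in_QW iota (gmul (gmul (ginv g) x) g).
Proof. by case=> w [s ->]; exists (gmul w g), s; rewrite invMg !gmulA. Qed.

Definition qgen (s : S) : QW iota := exist _ (iota s) (in_QW_gen s).

Definition qconj (g : W) (x : QW iota) : QW iota :=
  exist _ (gmul (gmul (ginv g) (proj1_sig x)) g) (in_QW_conj g (proj2_sig x)).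

Hypothesis iota_invol : forall s, gmul (iota s) (iota s) = gone.

Lemma QW_invol (x : QW iota) : gmul (proj1_sig x) (proj1_sig x) = gone.
Proof.
case: x => x [w [s xE]] /=; rewrite xE.
by rewrite -!gmulA (gmulA w) gmulVr gmul1l (gmulA (iota s)) iota_invol gmul1l gmulVl.
Qed.

Lemma QW_invg (x : QW iota) : ginv (proj1_sig x) = proj1_sig x.
Proof. exact/invg_eq/QW_invol. Qed.

Lemma qconjK (x y : QW iota) : qconj (proj1_sig x) (qconj (proj1_sig x) y) = y.
Proof. by apply: QW_inj; rewrite /= QW_invg !gmulA QW_invol gmul1l -gmulA QW_invol gmul1r. Qed.

Section AdjointRelations.
Variables (H : Grp) (f : QW iota -> H).
Hypothesis f_ad : ad_rels iota H f.

Lemma ad_qconj (x y : QW iota) :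
  gmul (gmul (ginv (f y)) (f x)) (f y) = f (qconj (proj1_sig y) x).
Proof. by apply: f_ad; rewrite /= QW_invg. Qed.

Lemma ad_qconjV (x y : QW iota) :
  gmul (gmul (f y) (f x)) (ginv (f y)) = f (qconj (proj1_sig y) x).
Proof.
have E := ad_qconj (qconj (proj1_sig y) x) y; rewrite qconjK in E.
by rewrite -E !gmulA gmulVr gmul1l mulgK.
Qed.

Lemma ad_sq_commute (x y : QW iota) :
  gmul (gmul (f x) (f x)) (f y) = gmul (f y) (gmul (f x) (f x)).
Proof.
have E := ad_qconjV (qconj (proj1_sig x) y) x; rewrite qconjK -ad_qconjV in E.
by rewrite -{2}E !gmulA !mulgVK.
Qed.

Lemma ad_sq_qconj (x y : QW iota) :
  gmul (f (qconj (proj1_sig y) x)) (f (qconj (proj1_sig y) x)) = gmul (f x) (f x).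
Proof.
by rewrite -ad_qconj !gmulA mulgK -(gmulA (ginv _)) -gmulA ad_sq_commute mulKg.
Qed.

Lemma ad_sq_word (L : seq S) (x : QW iota) :
  gmul (f (qconj (word_prod iota L) x)) (f (qconj (word_prod iota L) x)) = gmul (f x) (f x).
Proof.
elim: L x => [|s L IH] x /=.
  by rewrite (_ : qconj gone x = x) //; apply: QW_inj; rewrite /= invg1 gmul1l gmul1r.
rewrite (_ : qconj _ x = qconj (word_prod iota L) (qconj (proj1_sig (qgen s)) x)).
  by rewrite IH ad_sq_qconj.
by apply: QW_inj; rewrite /= invMg !gmulA.
Qed.

Lemma ad_sq_const : (forall w, exists L, word_prod iota L = w) -> one_conj_class iota ->
  forall x y : QW iota, gmul (f x) (f x) = gmul (f y) (f y).
Proof.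
move=> words [_ conj] x y.
have [w yw] := conj x y; have [L Lw] := words w.
by rewrite (_ : y = qconj (word_prod iota L) x) ?ad_sq_word //; apply: QW_inj; rewrite yw Lw.
Qed.

Hypothesis f_invol : forall x, gmul (f x) (f x) = gone.

Lemma ad_dihedral (s t : QW iota) k :
  gpow (gmul (proj1_sig s) (proj1_sig t)) k = gone ->
  gpow (gmul (f s) (f t)) k = gone.
Proof.
set U := gmul (proj1_sig s) (proj1_sig t); set u := gmul (f s) (f t) => Uk.
(* [(f s f t)^n f s] is the image of the reflection [(st)^n s]: both sequences obey the
   recursion of [dihedral_reflection_step]. *)
pose P n := exists y : QW iota,
  proj1_sig y = gmul (gpow U n) (proj1_sig s) /\ gmul (gpow u n) (f s) = f y.
have P01 : P 0%N /\ P 1%N.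
  split; first by exists s; rewrite /= !gmul1l.
  exists (qconj (proj1_sig s) t); split; first by rewrite /= gmul1r QW_invg.
  by rewrite -ad_qconjV (invg_eq (f_invol s)) /= gmul1r.
have Pn n : P n /\ P n.+1.
  elim: n => // n [[y0 [y0U y0u]] [y1 [y1U y1u]]]; split; first by exists y1.
  exists (qconj (proj1_sig y1) y0); split.
    by rewrite /= QW_invg y0U y1U dihedral_reflection_step ?QW_invol.
  by rewrite -ad_qconj (invg_eq (f_invol y1)) -y0u -y1u dihedral_reflection_step.
have [[y [yU yu]] _] := Pn k.
rewrite Uk gmul1l in yU; rewrite (QW_inj yU) in yu.
by apply: (mulIg (x := f s)); rewrite yu gmul1l.
Qed.
End AdjointRelations.

Lemma hom_ad_rels (H K : Grp) (f : QW iota -> H) (h : H -> K) :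
  hom h -> ad_rels iota H f -> ad_rels iota K (fun x => h (f x)).
Proof. by move=> h_hom f_ad x y z zyxy; rewrite -(f_ad _ _ _ zyxy) !h_hom (homV h_hom). Qed.
End CoxeterQuandle.

Lemma odd_sub_double (p q r : nat) (k : Z) :
  (2 * k = Z.of_nat p + Z.of_nat q - Z.of_nat r)%Z -> odd r = odd p (+) odd q.
Proof.
move: (odd_double_half p) (odd_double_half q) (odd_double_half r).
by case: (odd p); case: (odd q); case: (odd r) => Ep Eq Er E //; cbn [addb nat_of_bool] in *; lia.
Qed.

Lemma half_sub_double (p q r : nat) (k : Z) :
  (2 * k = Z.of_nat p + Z.of_nat q - Z.of_nat r)%Z ->
  k = ((if odd p && odd q then 1 else 0) + Z.of_nat p./2 - Z.of_nat r./2 + Z.of_nat q./2)%Z.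
Proof.
move=> E; have := odd_sub_double E; move: E.
move: (odd_double_half p) (odd_double_half q) (odd_double_half r).
case: (odd p); case: (odd q); case: (odd r) => Ep Eq Er E O //.
all: by cbn [andb addb nat_of_bool] in *; lia.
Qed.

Lemma tau_rho_cocycle (W : Grp) (l : W -> nat) :
  l gone = 0%N -> (forall a b, odd (l (gmul a b)) = odd (l a) (+) odd (l b)) ->
  normalized_2cocycle (tau_rho l).
Proof.
move=> l1 l_odd; split=> [w | a b c]; first by rewrite /tau_rho l1 andbF.
rewrite /tau_rho !l_odd.
by case: (odd (l a)); case: (odd (l b)); case: (odd (l c)).
Qed.

Lemma class_eq_ext_tau_rho (A W : Grp) (phi : A -> W) (z : A) (sigma : W -> A) (l : W -> nat) :
  (forall w, phi (sigma w) = w) ->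
  (forall a b, exists k : Z,
     gmul (sigma a) (sigma b) = gmul (gzpow z k) (sigma (gmul a b)) /\
     (2 * k = Z.of_nat (l a) + Z.of_nat (l b) - Z.of_nat (l (gmul a b)))%Z) ->
  class_eq_ext phi z (tau_rho l).
Proof.
move=> phi_sigma sigma_mul; exists sigma, (fun w => Z.of_nat (l w)./2); split=> // a b.
by have [k [-> /half_sub_double <-]] := sigma_mul a b.
Qed.

Section AdjointExtension.
Variables (S : finType) (m : S -> S -> option nat) (W : Grp) (iota : S -> W).
Hypotheses (Hm : coxeter_matrix m) (HW : is_presentation iota (cox_rels m))
  (Hc : one_conj_class iota).
Variables (A : Grp) (e : QW iota -> A) (phi : A -> W) (l : W -> nat).
Hypotheses (HA : is_presentation e (ad_rels iota)) (Hphi : hom phi)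
  (Hphie : forall x, phi (e x) = proj1_sig x) (Hl : forall w : W, is_length iota w (l w)).

Lemma iota_invol s : gmul (iota s) (iota s) = gone.
Proof. by have := proj1 HW s s 1 (proj1 (proj2 (Hm s s)) erefl); rewrite /= gmul1r. Qed.

Lemma length1 : l gone = 0%N.
Proof. by have := proj2 (Hl gone) [::] erefl; case: (l gone). Qed.

Definition reduced_word (w : W) : seq S :=
  proj1_sig (constructive_indefinite_description _ (proj1 (Hl w))).

Lemma reduced_wordP w : size (reduced_word w) = l w /\ word_prod iota (reduced_word w) = w.
Proof. by rewrite /reduced_word; case: constructive_indefinite_description. Qed.

Lemma words_generate w : exists L, word_prod iota L = w.
Proof. by exists (reduced_word w); case: (reduced_wordP w). Qed.

Variable q0 : QW iota.

Definition z := gmul (e q0) (e q0).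

Lemma e_sq x : gmul (e x) (e x) = z.
Proof. exact: (ad_sq_const iota_invol (proj1 HA) words_generate Hc). Qed.

Lemma z_central g : gmul z g = gmul g z.
Proof. exact: (presentation_central HA (ad_sq_commute iota_invol (proj1 HA) q0)). Qed.

Lemma cox_rels_zcl : cox_rels m (zquotient z_central) (fun s => zcl z_central (e (qgen iota s))).
Proof.
have zcl_ad := hom_ad_rels (zcl_hom z_central) (proj1 HA).
have zcl_invol x : gmul (zcl z_central (e x)) (zcl z_central (e x)) = gone.
  by rewrite -zcl_hom e_sq; apply/eq_zcl; exists 0%N, 1%N; rewrite /= gmul1l !gmul1r.
move=> s t k st_k.
exact: (ad_dihedral iota_invol zcl_ad zcl_invol (s := qgen iota s) (t := qgen iota t)
  (proj1 HW s t k st_k)).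
Qed.

Definition sigma (w : W) : A := word_prod (fun s => e (qgen iota s)) (reduced_word w).

Lemma phi_sigma w : phi (sigma w) = w.
Proof. by rewrite /sigma (hom_word_prod Hphi (g := iota)) ?(proj2 (reduced_wordP w)). Qed.

Lemma sigma_mul_eqmodz a b : eqmodz z (gmul (sigma a) (sigma b)) (sigma (gmul a b)).
Proof.
have [psi [psi_hom [psi_gen _]]] := proj2 HW _ _ cox_rels_zcl.
have zcl_sigma w : zcl z_central (sigma w) = psi w.
  rewrite /sigma (hom_word_prod (zcl_hom z_central) (g := fun s => psi (iota s))) => [|s].
    by rewrite -(hom_word_prod psi_hom (f := iota)) // (proj2 (reduced_wordP w)).
  by rewrite psi_gen.
by apply/(eq_zcl z_central); rewrite zcl_hom !zcl_sigma psi_hom.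
Qed.

Lemma sigma_mul a b : exists k : Z,
  gmul (sigma a) (sigma b) = gmul (gzpow z k) (sigma (gmul a b)) /\
  (2 * k = Z.of_nat (l a) + Z.of_nat (l b) - Z.of_nat (l (gmul a b)))%Z.
Proof.
have [i [j E]] := sigma_mul_eqmodz a b.
have [deg [deg_hom [deg_e _]]] := proj2 HA Zgrp (fun _ => 1%Z) (fun _ _ _ _ => erefl).
have deg_sigma w : deg (sigma w) = Z.of_nat (l w).
  rewrite /sigma (hom_word_prod deg_hom (g := fun _ => 1%Z)) //.
  by rewrite Zgrp_word_prod1 (proj1 (reduced_wordP w)).
have deg_z : deg z = 2%Z by rewrite /z deg_hom !deg_e.
exists (Z.of_nat j - Z.of_nat i)%Z; split; first by rewrite gzpow_sub -gmulA -E mulKg.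
move/(f_equal deg): E; rewrite !deg_hom !(hom_gpow deg_hom) deg_z !Zgrp_gpow !deg_sigma.
by cbn [gmul Zgrp]; lia.
Qed.
End AdjointExtension.

Theorem theorem4p8
  (S : finType) (m : S -> S -> option nat) (Hm : coxeter_matrix m)
  (W : Grp) (iota : S -> W) (HW : is_presentation iota (cox_rels m))
  (Hc : one_conj_class iota)
  (A : Grp) (e : QW iota -> A) (HA : is_presentation e (ad_rels iota))
  (phi : A -> W) (Hphi : hom phi) (Hphie : forall x, phi (e x) = proj1_sig x)
  (l : W -> nat) (Hl : forall w : W, is_length iota w (l w)) :
  normalized_2cocycle (tau_rho l) /\
  forall q0 : QW iota, (exists s : S, proj1_sig q0 = iota s) ->
    class_eq_ext phi (gmul (e q0) (e q0)) (tau_rho l).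
Proof.
have [x0 Qx0] := proj1 Hc.
split.
  apply: tau_rho_cocycle (length1 Hl) _ => a b.
  have [k [_ k_len]] := sigma_mul Hm HW Hc HA Hl (exist _ x0 Qx0) a b.
  exact: odd_sub_double k_len.
move=> q0 _.
exact: class_eq_ext_tau_rho (phi_sigma Hphi Hphie Hl) (sigma_mul Hm HW Hc HA Hl q0).
Qed.
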